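(* Let $(H,B_1,B_2)$ be a Rota-Baxter system of Hopf algebras with descendent Hopf algebra $H_{B_1,B_2}$ and let $A$ be a unital commutative algebra. Then the maps $\mathcal{B}_1,\mathcal{B}_2:\mathrm{Char}(H,A)\to\mathrm{Char}(H_{B_1,B_2},A)$, $\mathcal{B}_i(f)(a)=f(B_i(a))$ for $a\in H_1$, are group homomorphisms.
   Context: $\mathbb{F}$ is a field of characteristic $0$; Sweedler notation $\Delta(a)=a_1\otimes a_2$. A Rota-Baxter system of Hopf algebras is a triple $(H,B_1,B_2)$ with $(H,\cdot,1,\Delta,\epsilon,S)$ a cocommutative Hopf algebra, $B_1,B_2$ coalgebra homomorphisms with $B_1(1)=B_2(1)=1$, and for all $a,b\in H$: $B_1(a)B_1(b)=B_1(B_1(a_1)bS(B_2(a_2)))$, $B_2(a)B_2(b)=B_2(B_1(a_1)bS(B_2(a_2)))$. Descendent operation $a\circ b=B_1(a_1)bS(B_2(a_2))$, cocycle $\sigma(a)=B_1(a_1)S(B_2(a_2))$, $H_1=\operatorname{Im}(\sigma)$; $H_{B_1,B_2}$ is the Hopf algebra $H_1$ with product $\circ$, unit $1$, restricted $\Delta,\epsilon$, antipode $T(a)=S(B_1(a_1))B_2(a_2)$. Convolution: $(f\ast g)(a)=f(a_1)g(a_2)$. $\mathrm{Char}(H,A)$ is the group under $\ast$ of algebra homomorphisms $H\to A$; $\mathrm{Char}(H_{B_1,B_2},A)$ is the group under convolution (w.r.t. the coproduct of $H_1$) of algebra homomorphisms $(H_1,\circ,1)\to A$. *)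

(* Elements of H (x) H (resp. H (x) H (x) H) are represented by finite lists of
   pairs (resp. triples) of simple tensors; two such lists denote the same tensor
   iff they agree under every bilinear (resp. trilinear) map into every F-module
   (universal property of the tensor product).  Sweedler notation
   Delta(a) = a_1 (x) a_2 becomes a sum over the list [hdelta a]. *)
From HB Require Import structures.
From mathcomp Require Import all_boot all_order all_algebra.
Set Implicit Arguments. Unset Strict Implicit. Unset Printing Implicit Defensive.
Import Order.TTheory GRing.Theory Num.Theory.
Local Open Scope ring_scope.

Section Tensors.
Variables (F : fieldType) (H : lmodType F).

Definition bilin (V : lmodType F) (phi : H -> H -> V) : Prop :=
  (forall (c : F) x y z, phi (c *: x + y) z = c *: phi x z + phi y z) /\
  (forall (c : F) x y z, phi z (c *: x + y) = c *: phi z x + phi z y).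

Definition trilin (V : lmodType F) (phi : H -> H -> H -> V) : Prop :=
  (forall (c : F) x y u v, phi (c *: x + y) u v = c *: phi x u v + phi y u v) /\
  (forall (c : F) x y u v, phi u (c *: x + y) v = c *: phi u x v + phi u y v) /\
  (forall (c : F) x y u v, phi u v (c *: x + y) = c *: phi u v x + phi u v y).

Definition teq2 (s t : seq (H * H)) : Prop :=
  forall (V : lmodType F) (phi : H -> H -> V), bilin phi ->
    \sum_(p <- s) phi p.1 p.2 = \sum_(p <- t) phi p.1 p.2.

Definition teq3 (s t : seq (H * H * H)) : Prop :=
  forall (V : lmodType F) (phi : H -> H -> H -> V), trilin phi ->
    \sum_(p <- s) phi p.1.1 p.1.2 p.2 = \sum_(p <- t) phi p.1.1 p.1.2 p.2.

Definition linmap (V : lmodType F) (f : H -> V) : Prop :=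
  forall (c : F) x y, f (c *: x + y) = c *: f x + f y.

End Tensors.

Record HopfAlg (F : fieldType) (H : algType F) := {
  hdelta : H -> seq (H * H);
  heps : H -> F;
  hS : H -> H;
  hdelta_lin : forall (c : F) x y,
    teq2 (hdelta (c *: x + y))
         ([seq (c *: p.1, p.2) | p <- hdelta x] ++ hdelta y);
  hdelta_mul : forall x y,
    teq2 (hdelta (x * y)) [seq (p.1 * q.1, p.2 * q.2) | p <- hdelta x, q <- hdelta y];
  hdelta_one : teq2 (hdelta 1) [:: (1, 1)];
  heps_lin : forall (c : F) x y, heps (c *: x + y) = c * heps x + heps y;
  heps_mul : forall x y, heps (x * y) = heps x * heps y;
  heps_one : heps 1 = 1;
  hcoassoc : forall a,
    teq3 [seq (p.1, q.1, q.2) | p <- hdelta a, q <- hdelta p.2]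
         [seq (q.1, q.2, p.2) | p <- hdelta a, q <- hdelta p.1];
  hcounitl : forall a, \sum_(p <- hdelta a) heps p.1 *: p.2 = a;
  hcounitr : forall a, \sum_(p <- hdelta a) heps p.2 *: p.1 = a;
  hS_lin : linmap hS;
  hantipodel : forall a, \sum_(p <- hdelta a) hS p.1 * p.2 = heps a *: 1;
  hantipoder : forall a, \sum_(p <- hdelta a) p.1 * hS p.2 = heps a *: 1
}.

Section RB.
Variables (F : fieldType) (H : algType F) (HH : HopfAlg H).

Definition cocommutative : Prop :=
  forall a, teq2 (hdelta HH a) [seq (p.2, p.1) | p <- hdelta HH a].

Definition coalg_hom (B : H -> H) : Prop :=
  linmap B /\
  (forall a, teq2 (hdelta HH (B a)) [seq (B p.1, B p.2) | p <- hdelta HH a]) /\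
  (forall a, heps HH (B a) = heps HH a).

Variables (B1 B2 : H -> H).

Definition circ (a b : H) : H :=
  \sum_(p <- hdelta HH a) B1 p.1 * b * hS HH (B2 p.2).

Definition sigma (a : H) : H :=
  \sum_(p <- hdelta HH a) B1 p.1 * hS HH (B2 p.2).

Definition H1 (x : H) : Prop := exists a, x = sigma a.

Definition RBsystem : Prop :=
  cocommutative /\ coalg_hom B1 /\ coalg_hom B2 /\ B1 1 = 1 /\ B2 1 = 1 /\
  (forall a b, B1 a * B1 b = B1 (circ a b)) /\
  (forall a b, B2 a * B2 b = B2 (circ a b)).

Variable (A : comAlgType F).

Definition isChar (f : H -> A) : Prop :=
  linmap f /\ (forall x y, f (x * y) = f x * f y) /\ f 1 = 1.

Definition conv (f g : H -> A) (a : H) : A :=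
  \sum_(p <- hdelta HH a) f p.1 * g p.2.

(* Char(H_{B1,B2}, A): a map f, considered on H_1 only, which is a unital
   algebra homomorphism (H_1, o, 1) -> A *)
Definition isCharD (f : H -> A) : Prop :=
  (forall (c : F) x y, H1 x -> H1 y -> f (c *: x + y) = c *: f x + f y) /\
  (forall x y, H1 x -> H1 y -> f (circ x y) = f x * f y) /\
  f 1 = 1.

End RB.

(* Each B_i intertwines the two products, B_i(a) B_i(b) = B_i(a o b), so
   pulling a character back along B_i gives a character of (H_1, o); and B_i,
   being a coalgebra map, commutes with the coproduct, so pulling back
   preserves convolution. *)
From HB Require Import structures.
From mathcomp Require Import all_boot all_order all_algebra.
Set Implicit Arguments. Unset Strict Implicit. Unset Printing Implicit Defensive.
Import GRing.Theory.
Local Open Scope ring_scope.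

Section CharPullback.
Variables (F : fieldType) (H : algType F) (HH : HopfAlg H) (A : comAlgType F).

Lemma linmap_comp (V : lmodType F) (f : H -> V) (B : H -> H) :
  linmap B -> linmap f -> linmap (f \o B).
Proof. by move=> linB linf c x y /=; rewrite linB linf. Qed.

Lemma bilin_mul (f g : H -> A) :
  linmap f -> linmap g -> bilin (fun x y => f x * g y).
Proof.
move=> linf ling; split=> c x y z; first by rewrite linf mulrDl scalerAl.
by rewrite ling mulrDr scalerAr.
Qed.

Lemma conv_comp (B : H -> H) (f g : H -> A) :
  (forall a, teq2 (hdelta HH (B a)) [seq (B p.1, B p.2) | p <- hdelta HH a]) ->
  linmap f -> linmap g ->
  forall a, conv HH f g (B a) = conv HH (f \o B) (g \o B) a.
Proof.
move=> deltaB linf ling a.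
by rewrite /conv (deltaB a _ _ (bilin_mul linf ling)) big_map.
Qed.

Lemma isCharD_comp (B1 B2 B : H -> H) (f : H -> A) :
  linmap B -> B 1 = 1 -> (forall a b, B a * B b = B (circ HH B1 B2 a b)) ->
  isChar f -> isCharD HH B1 B2 (f \o B).
Proof.
move=> linB B1_1 mulB [linf [mulf f1]]; split; [|split].
- by move=> c x y _ _; apply: linmap_comp.
- by move=> x y _ _ /=; rewrite -mulB mulf.
- by rewrite /= B1_1.
Qed.

Lemma RBsystem_operator (B1 B2 B : H -> H) :
  RBsystem HH B1 B2 -> B = B1 \/ B = B2 ->
  [/\ coalg_hom HH B, B 1 = 1 & forall a b, B a * B b = B (circ HH B1 B2 a b)].
Proof. by move=> [_ [? [? [? [? [? ?]]]]]] [->|->]. Qed.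

End CharPullback.

Theorem mainTheorem11 (F : fieldType) (hF : [pchar F] =i pred0)
  (H : algType F) (HH : HopfAlg H) (B1 B2 : H -> H)
  (hRB : RBsystem HH B1 B2) (A : comAlgType F) :
  forall B : H -> H, (B = B1 \/ B = B2) ->
    (forall f : H -> A, isChar f -> isCharD HH B1 B2 (f \o B)) /\
    (forall f g : H -> A, isChar f -> isChar g ->
       forall a : H, H1 HH B1 B2 a ->
         (conv HH f g \o B) a = conv HH (f \o B) (g \o B) a).
Proof.
move=> B /(RBsystem_operator hRB) [[linB [deltaB _]] B_1 mulB]; split.
- by move=> f; apply: isCharD_comp.
- by move=> f g [linf _] [ling _] a _; apply: conv_comp.
Qed.
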